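(* For any $g>0$, $\kappa>0$, $\mathtt h\in(0,\infty]$, any lattice $\Gamma\subset\mathbb R^2$ and any $c_*\in\mathbb R^2$, any line through the origin contains at most two elements of the set $\mathcal V=\{j\in\Gamma'\setminus\{0\}:\omega(j)=c_*\cdot j\}$; i.e. $\mathcal V$ contains at most two pairwise collinear vectors.
   Context: $\Gamma'$ is the dual lattice of $\Gamma$ (a lattice in $\mathbb R^2$), and $\omega(\xi)=\sqrt{(g+\kappa|\xi|^2)|\xi|\tanh(\mathtt h|\xi|)}$ for $\xi\in\mathbb R^2$, with $\tanh(\mathtt h|\xi|)$ replaced by $1$ when $\mathtt h=\infty$. *)

From Stdlib Require Import Reals.
From Coquelicot Require Import Rbar.
Open Scope R_scope.

Definition vec2 := (R * R)%type.

Definition dot (x y : vec2) : R := fst x * fst y + snd x * snd y.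

Definition vnorm (x : vec2) : R := sqrt (fst x ^ 2 + snd x ^ 2).

Definition vscale (t : R) (x : vec2) : vec2 := (t * fst x, t * snd x).

Definition vadd (x y : vec2) : vec2 := (fst x + fst y, snd x + snd y).

Definition tanh (x : R) : R := (exp x - exp (- x)) / (exp x + exp (- x)).

Definition basis2 (e1 e2 : vec2) : Prop :=
  fst e1 * snd e2 - snd e1 * fst e2 <> 0.

Definition lattice (e1 e2 : vec2) : vec2 -> Prop :=
  fun x => exists m n : Z, x = vadd (vscale (IZR m) e1) (vscale (IZR n) e2).

Definition dual_lattice (Gamma : vec2 -> Prop) : vec2 -> Prop :=
  fun j => forall gam, Gamma gam -> exists k : Z, dot j gam = IZR k.

Definition depth_factor (h : Rbar) (xi : vec2) : R :=
  match h with
  | Finite r => tanh (r * vnorm xi)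
  | _ => 1
  end.

Definition omega (g kappa : R) (h : Rbar) (xi : vec2) : R :=
  sqrt ((g + kappa * vnorm xi ^ 2) * vnorm xi * depth_factor h xi).

Definition resonant_set (g kappa : R) (h : Rbar) (Gamma : vec2 -> Prop)
    (cstar : vec2) : vec2 -> Prop :=
  fun j => dual_lattice Gamma j /\ j <> (0, 0) /\ omega g kappa h j = dot cstar j.

Definition on_line (u x : vec2) : Prop := exists t : R, x = vscale t u.

From Pilot Require Import Defs.
From Stdlib Require Import Reals Lra.
From Coquelicot Require Import Coquelicot.
Open Scope R_scope.

(* On the line spanned by u, a resonant vector j = t u satisfies
   omega(j) = t (c.u) > 0, so the sign of t is fixed and j is determined by
   s = |j|; squaring gives the dispersion relation
   (g + kappa s^2) tanh(h s) |u|^2 = s (c.u)^2.  For h = oo it is a quadratic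
   in s.  For finite h, multiplying by cosh(h s) and putting x = h s gives
   K(x) = (A + B x^2) sinh x - C x cosh x with B > 0 and K(0) = 0.  Rolle's
   theorem for e^(-x) f and e^x (f' - f) shows that between n zeros of f there
   are n - 2 zeros of f'' - f.  Three positive zeros of K thus give two positive
   zeros of M = K'' - K, which also vanishes at 0, hence a positive zero of
   M'' - M = 8 B sinh x: impossible. *)

Lemma Rolle_exp_weighted (f f' : R -> R) (l a b : R) :
  (forall x, is_derive f x (f' x)) -> a < b -> f a = 0 -> f b = 0 ->
  exists c, a < c < b /\ f' c + l * f c = 0.
Proof.
  intros Hf Hab Ha Hb.
  set (w := fun x => exp (l * x) * f x).
  assert (Hw : forall x, is_derive w x (exp (l * x) * (f' x + l * f x))).
  { intro x. unfold w.
    replace (exp (l * x) * (f' x + l * f x))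
      with (l * exp (l * x) * f x + exp (l * x) * f' x) by ring.
    apply (is_derive_mult (fun x => exp (l * x)) f); [|apply Hf|intros; apply Rmult_comm].
    auto_derive; [exact I|ring]. }
  destruct (MVT_cor2 w (fun x => exp (l * x) * (f' x + l * f x)) a b Hab)
    as [c [Hc Hcab]].
  { intros c _. apply is_derive_Reals, Hw. }
  exists c. split; [exact Hcab|].
  assert (Hwab : w b - w a = 0) by (unfold w; rewrite Ha, Hb; ring).
  rewrite Hwab in Hc. pose proof (exp_pos (l * c)).
  destruct (Rmult_integral _ _ (eq_sym Hc)) as [H0|H0]; [|lra].
  destruct (Rmult_integral _ _ H0); lra.
Qed.

Lemma residual_root_between (f f' : R -> R) (a b : R) :
  (forall x, is_derive f x (f' x)) -> a < b -> f a = 0 -> f b = 0 ->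
  exists c, a < c < b /\ f' c = f c.
Proof.
  intros Hf Hab Ha Hb.
  destruct (Rolle_exp_weighted f f' (-1) a b Hf Hab Ha Hb) as [c [Hc Ec]].
  exists c; split; [exact Hc|lra].
Qed.

Lemma second_residual_root_between (f f' f'' : R -> R) (a b : R) :
  (forall x, is_derive f x (f' x)) -> (forall x, is_derive f' x (f'' x)) ->
  a < b -> f' a = f a -> f' b = f b ->
  exists c, a < c < b /\ f'' c = f c.
Proof.
  intros Hf Hf' Hab Ha Hb.
  assert (Hg : forall x, is_derive (fun y => f' y - f y) x (f'' x - f' x))
    by (intro x; apply (is_derive_minus f' f); auto).
  destruct (Rolle_exp_weighted _ _ 1 a b Hg Hab) as [c [Hc Ec]]; try lra.
  exists c; split; [exact Hc|lra].
Qed.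

Lemma sinh_pos x : 0 < x -> 0 < sinh x.
Proof.
  intro Hx; unfold sinh.
  assert (exp (- x) < exp x) by (apply exp_increasing; lra).
  lra.
Qed.

Section FiniteDepthResidual.

Variables A B C : R.

Definition K x := (A + B * x ^ 2) * sinh x - C * x * cosh x.
Definition K' x := (A - C + B * x ^ 2) * cosh x + (2 * B - C) * x * sinh x.
Definition K'' x :=
  (A + 2 * B - 2 * C + B * x ^ 2) * sinh x + (4 * B - C) * x * cosh x.
Definition M x := K'' x - K x.
Definition M' x := (6 * B - 2 * C) * cosh x + 4 * B * x * sinh x.
Definition M'' x := (10 * B - 2 * C) * sinh x + 4 * B * x * cosh x.

Lemma is_derive_K x : is_derive K x (K' x).
Proof. unfold K, K', sinh, cosh; auto_derive; [exact I|field]. Qed.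

Lemma is_derive_K' x : is_derive K' x (K'' x).
Proof. unfold K', K'', sinh, cosh; auto_derive; [exact I|field]. Qed.

Lemma is_derive_M x : is_derive M x (M' x).
Proof. unfold M, K'', K, M', sinh, cosh; auto_derive; [exact I|field]. Qed.

Lemma is_derive_M' x : is_derive M' x (M'' x).
Proof. unfold M', M'', sinh, cosh; auto_derive; [exact I|field]. Qed.

Lemma K_0 : K 0 = 0.
Proof. unfold K, sinh; rewrite Ropp_0; field. Qed.

Lemma M_0 : M 0 = 0.
Proof. unfold M, K'', K, sinh; rewrite Ropp_0; field. Qed.

Lemma M''_sub_M x : M'' x - M x = 8 * B * sinh x.
Proof. unfold M'', M, K'', K; ring. Qed.

Lemma K_no_three_positive_roots (HB : 0 < B) (a b c : R) :
  0 < a -> a < b -> b < c -> K a = 0 -> K b = 0 -> K c = 0 -> False.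
Proof.
  intros Ha Hab Hbc Ka Kb Kc.
  destruct (residual_root_between K K' 0 a is_derive_K Ha K_0 Ka) as [p1 [Hp1 E1]].
  destruct (residual_root_between K K' a b is_derive_K Hab Ka Kb) as [p2 [Hp2 E2]].
  destruct (residual_root_between K K' b c is_derive_K Hbc Kb Kc) as [p3 [Hp3 E3]].
  destruct (second_residual_root_between K K' K'' p1 p2 is_derive_K is_derive_K'
              ltac:(lra) E1 E2) as [r1 [Hr1 F1]].
  destruct (second_residual_root_between K K' K'' p2 p3 is_derive_K is_derive_K'
              ltac:(lra) E2 E3) as [r2 [Hr2 F2]].
  assert (Mr1 : M r1 = 0) by (unfold M; lra).
  assert (Mr2 : M r2 = 0) by (unfold M; lra).
  destruct (residual_root_between M M' 0 r1 is_derive_M ltac:(lra) M_0 Mr1)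
    as [q1 [Hq1 G1]].
  destruct (residual_root_between M M' r1 r2 is_derive_M ltac:(lra) Mr1 Mr2)
    as [q2 [Hq2 G2]].
  destruct (second_residual_root_between M M' M'' q1 q2 is_derive_M is_derive_M'
              ltac:(lra) G1 G2) as [s [Hs Es]].
  pose proof (M''_sub_M s) as Hsinh.
  pose proof (sinh_pos s ltac:(lra)).
  nra.
Qed.

End FiniteDepthResidual.

(* Stdlib's [Rtrigo_def.tanh] shadows [Defs.tanh], hence the qualified name. *)
Lemma sinh_tanh x : sinh x = Defs.tanh x * cosh x.
Proof.
  unfold sinh, Defs.tanh, cosh.
  pose proof (exp_pos x); pose proof (exp_pos (- x)).
  field; lra.
Qed.

Lemma K_rescaled (g kappa n a r s : R) : r <> 0 ->
  K (g * n) (kappa * n / r ^ 2) (a / r) (r * s)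
  = cosh (r * s) * ((g + kappa * s ^ 2) * Defs.tanh (r * s) * n - s * a).
Proof. intro Hr; unfold K; rewrite sinh_tanh; field; exact Hr. Qed.

Definition tanh_depth (h : Rbar) (s : R) : R :=
  match h with Finite r => Defs.tanh (r * s) | _ => 1 end.

Lemma depth_factor_tanh_depth h xi : depth_factor h xi = tanh_depth h (vnorm xi).
Proof. destruct h; reflexivity. Qed.

Lemma tanh_pos x : 0 < x -> 0 < Defs.tanh x.
Proof.
  intros Hx. unfold Defs.tanh.
  assert (exp (- x) < exp x) by (apply exp_increasing; lra).
  pose proof (exp_pos (- x)).
  apply Rdiv_lt_0_compat; lra.
Qed.

Lemma tanh_depth_pos h s : Rbar_lt 0 h -> 0 < s -> 0 < tanh_depth h s.
Proof.
  intros Hh Hs. destruct h as [r| |]; simpl in *; try lra.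
  apply tanh_pos. nra.
Qed.

Definition dispersion_eq (g kappa : R) (h : Rbar) (n a s : R) : Prop :=
  (g + kappa * s ^ 2) * tanh_depth h s * n = s * a.

Lemma quadratic_no_three_roots (p q r s1 s2 s3 : R) : p <> 0 ->
  s1 < s2 -> s2 < s3 ->
  p * s1 ^ 2 + q * s1 + r = 0 -> p * s2 ^ 2 + q * s2 + r = 0 ->
  p * s3 ^ 2 + q * s3 + r = 0 -> False.
Proof.
  intros Hp H12 H23 E1 E2 E3.
  assert (F12 : p * (s1 + s2) + q = 0).
  { apply Rmult_eq_reg_r with (s1 - s2); lra. }
  assert (F13 : p * (s1 + s3) + q = 0).
  { apply Rmult_eq_reg_r with (s1 - s3); lra. }
  apply Hp, Rmult_eq_reg_r with (s2 - s3); lra.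
Qed.

Lemma dispersion_eq_no_three_increasing_roots g kappa h n a s1 s2 s3 :
  0 < kappa -> Rbar_lt 0 h -> 0 < n -> 0 < s1 -> s1 < s2 -> s2 < s3 ->
  dispersion_eq g kappa h n a s1 -> dispersion_eq g kappa h n a s2 ->
  dispersion_eq g kappa h n a s3 -> False.
Proof.
  unfold dispersion_eq.
  intros Hk Hh Hn H1 H12 H23 E1 E2 E3.
  destruct h as [r| |]; simpl in Hh, E1, E2, E3; try lra.
  - assert (Hroot : forall s, (g + kappa * s ^ 2) * Defs.tanh (r * s) * n = s * a ->
              K (g * n) (kappa * n / r ^ 2) (a / r) (r * s) = 0).
    { intros s Es. rewrite K_rescaled by lra. rewrite Es. ring. }
    apply (K_no_three_positive_roots (g * n) (kappa * n / r ^ 2) (a / r)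
             ltac:(apply Rdiv_lt_0_compat; nra) (r * s1) (r * s2) (r * s3));
      try nra; apply Hroot; assumption.
  - apply (quadratic_no_three_roots (kappa * n) (- a) (g * n) s1 s2 s3);
      try nra; lra.
Qed.

Lemma two_equal_of_no_increasing_triple (P : R -> Prop) :
  (forall a b c, a < b -> b < c -> P a -> P b -> P c -> False) ->
  forall x y z, P x -> P y -> P z -> x = y \/ x = z \/ y = z.
Proof.
  intros H x y z Px Py Pz.
  destruct (Req_dec x y); [now left|].
  destruct (Req_dec x z); [now right; left|].
  destruct (Req_dec y z); [now right; right|].
  exfalso.
  destruct (Rlt_or_le x y), (Rlt_or_le x z), (Rlt_or_le y z);
    first [ lra
          | solve [apply (H x y z); auto; lra] | solve [apply (H x z y); auto; lra]
          | solve [apply (H y x z); auto; lra] | solve [apply (H y z x); auto; lra]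
          | solve [apply (H z x y); auto; lra] | solve [apply (H z y x); auto; lra] ].
Qed.

Lemma dispersion_eq_at_most_two_positive_roots g kappa h n a x y z :
  0 < kappa -> Rbar_lt 0 h -> 0 < n -> 0 < x -> 0 < y -> 0 < z ->
  dispersion_eq g kappa h n a x -> dispersion_eq g kappa h n a y ->
  dispersion_eq g kappa h n a z -> x = y \/ x = z \/ y = z.
Proof.
  intros Hk Hh Hn Hx Hy Hz Ex Ey Ez.
  apply (two_equal_of_no_increasing_triple
           (fun s => 0 < s /\ dispersion_eq g kappa h n a s)); auto.
  intros s1 s2 s3 H12 H23 [H1 E1] [_ E2] [_ E3].
  exact (dispersion_eq_no_three_increasing_roots g kappa h n a s1 s2 s3
           Hk Hh Hn H1 H12 H23 E1 E2 E3).
Qed.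

Lemma vnorm_pos u : u <> (0, 0) -> 0 < vnorm u.
Proof.
  destruct u as [u1 u2]; intro Hu; unfold vnorm; cbn [fst snd].
  apply sqrt_lt_R0.
  destruct (Req_dec u1 0) as [->|H1]; [destruct (Req_dec u2 0) as [->|H2]|].
  - contradiction.
  - assert (0 < u2 * u2) by (destruct (Rlt_or_le u2 0); nra). nra.
  - assert (0 < u1 * u1) by (destruct (Rlt_or_le u1 0); nra). nra.
Qed.

Lemma vnorm_vscale t u : vnorm (vscale t u) = Rabs t * vnorm u.
Proof.
  destruct u as [u1 u2]; unfold vnorm, vscale; cbn [fst snd].
  replace ((t * u1) ^ 2 + (t * u2) ^ 2) with (t² * (u1 ^ 2 + u2 ^ 2))
    by (unfold Rsqr; ring).
  rewrite sqrt_mult_alt by apply Rle_0_sqr.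
  rewrite sqrt_Rsqr_abs; reflexivity.
Qed.

Lemma dot_vscale_r c t u : dot c (vscale t u) = t * dot c u.
Proof. unfold dot, vscale; simpl; ring. Qed.

Lemma resonant_multiple_dispersion g kappa h c u t :
  0 < g -> 0 < kappa -> Rbar_lt 0 h -> u <> (0, 0) -> t <> 0 ->
  omega g kappa h (vscale t u) = dot c (vscale t u) ->
  0 < t * dot c u /\ 0 < Rabs t * vnorm u /\
  dispersion_eq g kappa h (vnorm u ^ 2) (dot c u ^ 2) (Rabs t * vnorm u).
Proof.
  intros Hg Hk Hh Hu Ht Ho.
  set (s := Rabs t * vnorm u).
  assert (Hs : 0 < s)
    by (apply Rmult_lt_0_compat; [apply Rabs_pos_lt | apply vnorm_pos]; auto).
  unfold omega in Ho.
  rewrite depth_factor_tanh_depth, vnorm_vscale, dot_vscale_r in Ho; fold s in Ho.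
  set (a := dot c u) in *.
  pose proof (tanh_depth_pos h s Hh Hs) as HD.
  assert (Hgk : 0 < g + kappa * s ^ 2) by (pose proof (pow2_ge_0 s); nra).
  assert (HX : 0 < (g + kappa * s ^ 2) * s * tanh_depth h s)
    by (apply Rmult_lt_0_compat; [apply Rmult_lt_0_compat|]; assumption).
  assert (Hta : 0 < t * a) by (rewrite <- Ho; apply sqrt_lt_R0; exact HX).
  assert (Hsq : (g + kappa * s ^ 2) * s * tanh_depth h s = (t * a) ^ 2)
    by (rewrite <- Ho, pow2_sqrt; lra).
  repeat split; auto.
  unfold dispersion_eq.
  apply Rmult_eq_reg_l with s; [|lra].
  transitivity ((g + kappa * s ^ 2) * s * tanh_depth h s * vnorm u ^ 2); [ring|].
  rewrite Hsq, Rpow_mult_distr, <- (pow2_abs t). unfold s. ring.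
Qed.

Lemma vscale_eq_of_same_norm_same_sign t t' a u :
  u <> (0, 0) -> 0 < t * a -> 0 < t' * a ->
  Rabs t * vnorm u = Rabs t' * vnorm u -> vscale t u = vscale t' u.
Proof.
  intros Hu Ht Ht' E.
  pose proof (vnorm_pos u Hu).
  assert (Eabs : Rabs t = Rabs t') by (apply Rmult_eq_reg_r with (vnorm u); lra).
  destruct (Rsqr_eq t t' (Rsqr_eq_asb_1 _ _ Eabs)) as [->| ->]; [reflexivity|nra].
Qed.

Theorem mainTheorem4 :
  forall (g kappa : R) (h : Rbar) (e1 e2 cstar : vec2),
    0 < g -> 0 < kappa -> Rbar_lt 0 h ->
    basis2 e1 e2 ->
    forall u : vec2, u <> (0, 0) ->
    forall j1 j2 j3 : vec2,
      resonant_set g kappa h (lattice e1 e2) cstar j1 ->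
      resonant_set g kappa h (lattice e1 e2) cstar j2 ->
      resonant_set g kappa h (lattice e1 e2) cstar j3 ->
      on_line u j1 -> on_line u j2 -> on_line u j3 ->
      j1 = j2 \/ j1 = j3 \/ j2 = j3.
Proof.
  intros g kappa h e1 e2 c Hg Hk Hh _ u Hu j1 j2 j3
    [_ [N1 O1]] [_ [N2 O2]] [_ [N3 O3]] [t1 ->] [t2 ->] [t3 ->].
  assert (Hnz : forall t, vscale t u <> (0, 0) -> t <> 0)
    by (intros t N ->; apply N; unfold vscale; f_equal; ring).
  destruct (resonant_multiple_dispersion g kappa h c u t1 Hg Hk Hh Hu (Hnz _ N1) O1)
    as [A1 [P1 D1]].
  destruct (resonant_multiple_dispersion g kappa h c u t2 Hg Hk Hh Hu (Hnz _ N2) O2)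
    as [A2 [P2 D2]].
  destruct (resonant_multiple_dispersion g kappa h c u t3 Hg Hk Hh Hu (Hnz _ N3) O3)
    as [A3 [P3 D3]].
  destruct (dispersion_eq_at_most_two_positive_roots g kappa h _ _ _ _ _
              Hk Hh (pow_lt _ 2 (vnorm_pos u Hu)) P1 P2 P3 D1 D2 D3) as [E|[E|E]];
    [left | right; left | right; right];
    eapply vscale_eq_of_same_norm_same_sign; eauto.
Qed.
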